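(* Let $\mathcal{I}\in\mathrm{Ins}(\Omega,\mathcal{H},\mathcal{K})$ and $\mathcal{J}\in\mathrm{Ins}(\Lambda,\mathcal{H},\mathcal{V})$ be instruments. If $\mathcal{I}\preceq\mathcal{J}$, then $\mathcal{I}$ is compatible with $\mathsf{A}^{\mathcal{J}}$; in particular $\Phi^{\mathcal{I}}$ is compatible with $\mathsf{A}^{\mathcal{J}}$ and $\mathsf{A}^{\mathcal{I}}$ is compatible with $\mathsf{A}^{\mathcal{J}}$.
   Context: All Hilbert spaces are finite-dimensional and complex, and all outcome sets are finite. A POVM $\mathsf{A}\in\mathcal{O}(\Omega,\mathcal{H})$ is a map $x\mapsto \mathsf{A}(x)$ from $\Omega$ to positive operators on $\mathcal{H}$ with $\sum_x \mathsf{A}(x)=I$. An instrument $\mathcal{I}\in\mathrm{Ins}(\Omega,\mathcal{H},\mathcal{K})$ is a family $(\mathcal{I}_x)_{x\in\Omega}$ of completely positive trace-nonincreasing linear maps $\mathcal{L}(\mathcal{H})\to\mathcal{L}(\mathcal{K})$ such that $\Phi^{\mathcal{I}}:=\sum_x\mathcal{I}_x$ is trace preserving (induced channel); its induced POVM $\mathsf{A}^{\mathcal{I}}$ is defined by $\mathrm{tr}[\mathsf{A}^{\mathcal{I}}(x)\varrho]=\mathrm{tr}[\mathcal{I}_x(\varrho)]$. Postprocessing: $\mathcal{I}\preceq\mathcal{J}$ if there exist instruments $\mathcal{R}^{(y)}\in\mathrm{Ins}(\Omega,\mathcal{V},\mathcal{K})$, $y\in\Lambda$, with $\mathcal{I}_x=\sum_{y}\mathcal{R}^{(y)}_x\circ\mathcal{J}_y$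 for all $x$. Two instruments $\mathcal{I}\in\mathrm{Ins}(\Omega,\mathcal{H},\mathcal{K})$, $\mathcal{J}\in\mathrm{Ins}(\Lambda,\mathcal{H},\mathcal{V})$ are compatible if there is $\mathcal{G}\in\mathrm{Ins}(\Omega\times\Lambda,\mathcal{H},\mathcal{K}\otimes\mathcal{V})$ with $\sum_{x}\mathrm{tr}_{\mathcal{K}}[\mathcal{G}_{(x,y)}(\varrho)]=\mathcal{J}_y(\varrho)$ for all $y$ and $\sum_y\mathrm{tr}_{\mathcal{V}}[\mathcal{G}_{(x,y)}(\varrho)]=\mathcal{I}_x(\varrho)$ for all $x$, for all states $\varrho$. A POVM $\mathsf{A}\in\mathcal{O}(\Omega,\mathcal{H})$ is identified with the instrument in $\mathrm{Ins}(\Omega,\mathcal{H},\mathbb{C})$ given by $\varrho\mapsto\mathrm{tr}[\mathsf{A}(x)\varrho]$, and a channel with a one-outcome instrument; compatibility involving POVMs or channels is defined through these identifications. *)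

(* finite-dimensional complex Hilbert spaces are C^n, operators
   are n x n matrices over a numeric closed field C (instantiated with R[i],
   R : realType, in the theorem). *)
From HB Require Import structures.
From mathcomp Require Import all_boot all_order all_algebra.
From mathcomp Require Import complex mxtens.
From mathcomp Require Import reals.

Set Implicit Arguments.
Unset Strict Implicit.
Unset Printing Implicit Defensive.

Import Order.TTheory GRing.Theory Num.Theory.
Local Open Scope ring_scope.

Section QuantumDefs.
Variable C : numClosedFieldType.

Definition adjv {n} (v : 'cV[C]_n) : 'rV[C]_n := map_mx Num.conj v^T.

Definition psd {n} (A : 'M[C]_n) : Prop :=
  forall v : 'cV[C]_n, 0 <= (adjv v *m A *m v) 0 0.

Definition is_state {n} (rho : 'M[C]_n) : Prop := psd rho /\ \tr rho = 1.

Definition lin_map {n m} (f : 'M[C]_n -> 'M[C]_m) : Prop :=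
  forall (a : C) (X Y : 'M[C]_n), f (a *: X + Y) = a *: f X + f Y.

(* Tensor convention: C^k (x) C^n is C^(k*n) via mxtens_index (a,i). *)
Definition block {k n} (a b : 'I_k) (X : 'M[C]_(k * n)) : 'M[C]_n :=
  \matrix_(i, j) X (mxtens_index (a, i)) (mxtens_index (b, j)).

(* ampliation id_k (x) f *)
Definition ampl {n m} (k : nat) (f : 'M[C]_n -> 'M[C]_m) (X : 'M[C]_(k * n))
  : 'M[C]_(k * m) :=
  \matrix_(p, q) f (block (mxtens_unindex p).1 (mxtens_unindex q).1 X)
                   (mxtens_unindex p).2 (mxtens_unindex q).2.

Arguments ampl {n m} k f X.

Definition completely_positive {n m} (f : 'M[C]_n -> 'M[C]_m) : Prop :=
  forall (k : nat) (X : 'M[C]_(k * n)), psd X -> psd (ampl k f X).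

Definition trace_nonincreasing {n m} (f : 'M[C]_n -> 'M[C]_m) : Prop :=
  forall rho : 'M[C]_n, psd rho -> \tr (f rho) <= \tr rho.

Definition trace_preserving {n m} (f : 'M[C]_n -> 'M[C]_m) : Prop :=
  forall rho : 'M[C]_n, \tr (f rho) = \tr rho.

Definition induced_channel {O : finType} {n m} (I : O -> 'M[C]_n -> 'M[C]_m)
  : 'M[C]_n -> 'M[C]_m := fun rho => \sum_(x : O) I x rho.

Definition is_instrument {O : finType} {n m} (I : O -> 'M[C]_n -> 'M[C]_m)
  : Prop :=
  [/\ forall x, lin_map (I x),
      forall x, completely_positive (I x),
      forall x, trace_nonincreasing (I x)
    & trace_preserving (induced_channel I)].

Definition is_povm {O : finType} {n} (A : O -> 'M[C]_n) : Prop :=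
  (forall x, psd (A x)) /\ \sum_(x : O) A x = 1%:M.

Definition induced_povm {O : finType} {n m} (I : O -> 'M[C]_n -> 'M[C]_m)
  (A : O -> 'M[C]_n) : Prop :=
  forall (x : O) (rho : 'M[C]_n), is_state rho -> \tr (A x *m rho) = \tr (I x rho).

(* a POVM as an instrument with output space C (= C^1) *)
Definition povm_ins {O : finType} {n} (A : O -> 'M[C]_n) : O -> 'M[C]_n -> 'M[C]_1 :=
  fun x rho => (\tr (A x *m rho))%:M.

(* a channel as a one-outcome instrument *)
Definition channel_ins {n m} (Phi : 'M[C]_n -> 'M[C]_m) : unit -> 'M[C]_n -> 'M[C]_m :=
  fun _ => Phi.

Definition postprocessing {O L : finType} {n k v}
  (I : O -> 'M[C]_n -> 'M[C]_k) (J : L -> 'M[C]_n -> 'M[C]_v) : Prop :=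
  exists Rp : L -> O -> 'M[C]_v -> 'M[C]_k,
    (forall y, is_instrument (Rp y)) /\
    (forall (x : O) (rho : 'M[C]_n), I x rho = \sum_(y : L) Rp y x (J y rho)).

Definition ptrace2 {k v} (X : 'M[C]_(k * v)) : 'M[C]_k :=
  \matrix_(i, j) \sum_(b < v) X (mxtens_index (i, b)) (mxtens_index (j, b)).
Definition ptrace1 {k v} (X : 'M[C]_(k * v)) : 'M[C]_v :=
  \matrix_(i, j) \sum_(a < k) X (mxtens_index (a, i)) (mxtens_index (a, j)).

Definition compatible {O L : finType} {n k v}
  (I : O -> 'M[C]_n -> 'M[C]_k) (J : L -> 'M[C]_n -> 'M[C]_v) : Prop :=
  exists G : (O * L)%type -> 'M[C]_n -> 'M[C]_(k * v),
    [/\ is_instrument G,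
        (forall (y : L) (rho : 'M[C]_n), is_state rho ->
           \sum_(x : O) ptrace1 (G (x, y) rho) = J y rho)
      & (forall (x : O) (rho : 'M[C]_n), is_state rho ->
           \sum_(y : L) ptrace2 (G (x, y) rho) = I x rho)].

End QuantumDefs.

(* Write I_x = \sum_y R^(y)_x o J_y.  Running J and then, on outcome y, the
   instrument R^(y) is an instrument with outcomes (x, y); keeping its output
   in K (x) C^1 makes it a joint instrument for I and A^J, because summing
   over x leaves tr J_y(rho) = tr[A^J(y) rho] and summing over y leaves I_x.
   Compatibility with a fixed second instrument survives forgetting the
   outcome of the first one (giving Phi^I) and tracing out its output space
   (giving A^I). *)

From mathcomp Require Import all_boot all_order all_algebra.
From mathcomp Require Import complex mxtens.
From mathcomp Require Import reals.

Set Implicit Arguments.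
Unset Strict Implicit.
Unset Printing Implicit Defensive.

Import Order.TTheory GRing.Theory Num.Theory.
Local Open Scope ring_scope.

Lemma sum_prodE (V : nmodType) (I J : finType) (F : I * J -> V) :
  \sum_p F p = \sum_i \sum_j F (i, j).
Proof. by rewrite pair_bigA; apply: eq_bigr => -[]. Qed.

Section Instruments.
Variable C : numClosedFieldType.

Lemma psd_formE n (A : 'M[C]_n) (v : 'cV[C]_n) :
  (adjv v *m A *m v) 0 0 = \sum_p \sum_q Num.conj (v p 0) * A p q * v q 0.
Proof.
rewrite mxE exchange_big /=; apply: eq_bigr => q _.
by rewrite !mxE mulr_suml; apply: eq_bigr => p _; rewrite !mxE.
Qed.

(* [X (s p) (s q)] is the compression [S^* X S] by the 0/1 matrix of [s]. *)
Lemma psd_reindex n m (s : 'I_m -> 'I_n) (X : 'M[C]_n) :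
  psd X -> psd (\matrix_(p, q) X (s p) (s q)).
Proof.
move=> psdX v; pose w : 'cV[C]_n := \col_i \sum_(p | s p == i) v p 0.
suff -> : (adjv v *m (\matrix_(p, q) X (s p) (s q)) *m v) 0 0
  = (adjv w *m X *m w) 0 0 by exact: psdX.
rewrite !psd_formE (partition_big s xpredT) //=; apply: eq_bigr => i _.
under [RHS]eq_bigr => j _ do rewrite mxE rmorph_sum !mulr_suml.
rewrite [RHS]exchange_big; apply: eq_bigr => p /eqP <-.
rewrite (partition_big s xpredT) //=; apply: eq_bigr => j _.
rewrite !mxE mulr_sumr; apply: eq_bigr => q /eqP <-.
by rewrite mxE.
Qed.

Lemma psd_sum (T : finType) n (F : T -> 'M[C]_n) :
  (forall i, psd (F i)) -> psd (\sum_i F i).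
Proof.
move=> psdF v; rewrite mulmx_sumr mulmx_suml summxE.
by apply: sumr_ge0 => i _; apply: psdF.
Qed.

Lemma psd_mxtrace_ge0 n (A : 'M[C]_n) : psd A -> 0 <= \tr A.
Proof.
move=> psdA; apply: sumr_ge0 => i _.
have := psd_reindex (fun _ : 'I_1 => i) psdA (const_mx 1).
by rewrite psd_formE !big_ord1 !mxE rmorph1 mul1r mulr1.
Qed.

Lemma lin_map_comp n m l (f : 'M[C]_m -> 'M[C]_l) (g : 'M[C]_n -> 'M[C]_m) :
  lin_map f -> lin_map g -> lin_map (f \o g).
Proof. by move=> linf ling a X Y /=; rewrite ling linf. Qed.

Lemma lin_map_sum (T : finType) n m (f : T -> 'M[C]_n -> 'M[C]_m) :
  (forall i, lin_map (f i)) -> lin_map (fun X => \sum_i f i X).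
Proof.
move=> linf a X Y; rewrite scaler_sumr -big_split /=.
by apply: eq_bigr => i _; apply: linf.
Qed.

Lemma block_ampl K n m (f : 'M[C]_n -> 'M[C]_m) (X : 'M[C]_(K * n)) a b :
  block a b (ampl f X) = f (block a b X).
Proof. by apply/matrixP => i j; rewrite !mxE !mxtens_indexK. Qed.

Lemma cp_comp n m l (f : 'M[C]_m -> 'M[C]_l) (g : 'M[C]_n -> 'M[C]_m) :
  completely_positive f -> completely_positive g ->
  completely_positive (f \o g).
Proof.
move=> cpf cpg K X psdX.
suff -> : ampl (f \o g) X = ampl f (ampl (k := K) g X) by exact/cpf/cpg.
by apply/matrixP => p q; rewrite !mxE block_ampl.
Qed.

Lemma cp_sum (T : finType) n m (f : T -> 'M[C]_n -> 'M[C]_m) :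
  (forall i, completely_positive (f i)) ->
  completely_positive (fun X => \sum_i f i X).
Proof.
move=> cpf K X psdX.
suff -> : ampl (fun X => \sum_i f i X) X = \sum_i ampl (f i) X.
  by apply: psd_sum => i; apply: cpf.
by apply/matrixP => p q; rewrite mxE !summxE; apply: eq_bigr => i _; rewrite mxE.
Qed.

(* A one-dimensional ampliation of [f] is [f] up to relabelling the indices. *)
Lemma cp_psd n m (f : 'M[C]_n -> 'M[C]_m) X :
  completely_positive f -> psd X -> psd (f X).
Proof.
move=> cpf psdX.
pose X1 : 'M[C]_(1 * n) :=
  \matrix_(p, q) X (mxtens_unindex p).2 (mxtens_unindex q).2.
have block_X1 a b : block a b X1 = X.
  by apply/matrixP => i j; rewrite !mxE !mxtens_indexK.
suff -> : f X =
    \matrix_(i, j) ampl f X1 (mxtens_index (ord0, i)) (mxtens_index (ord0, j)).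
  by apply/psd_reindex/cpf/psd_reindex.
by apply/matrixP => i j; rewrite !mxE block_X1 !mxtens_indexK.
Qed.

(* The Kraus sum [\sum_i S_i^* X S_i], [S_i] the 0/1 matrix of [s i]. *)
Definition sum_reindex n m (T : finType) (s : T -> 'I_m -> 'I_n) (X : 'M[C]_n)
  : 'M[C]_m :=
  \matrix_(p, q) \sum_i X (s i p) (s i q).

Lemma lin_map_sum_reindex n m (T : finType) (s : T -> 'I_m -> 'I_n) :
  lin_map (sum_reindex s).
Proof.
move=> a X Y; apply/matrixP => p q; rewrite !mxE mulr_sumr -big_split /=.
by apply: eq_bigr => i _; rewrite !mxE.
Qed.

Lemma psd_sum_reindex n m (T : finType) (s : T -> 'I_m -> 'I_n) X :
  psd X -> psd (sum_reindex s X).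
Proof.
move=> psdX; suff -> : sum_reindex s X = \sum_i \matrix_(p, q) X (s i p) (s i q).
  by apply: psd_sum => i; apply: psd_reindex.
by apply/matrixP => p q; rewrite !mxE summxE; apply: eq_bigr => i _; rewrite mxE.
Qed.

Lemma cp_sum_reindex n m (T : finType) (s : T -> 'I_m -> 'I_n) :
  completely_positive (sum_reindex s).
Proof.
move=> K X psdX.
pose sK i (p : 'I_(K * m)) :=
  mxtens_index (n := n) ((mxtens_unindex p).1, s i (mxtens_unindex p).2).
suff -> : ampl (sum_reindex s) X = sum_reindex sK X by apply: psd_sum_reindex.
by apply/matrixP => p q; rewrite !mxE; apply: eq_bigr => i _; rewrite mxE.
Qed.

Lemma mxtrace_tensE k v (X : 'M[C]_(k * v)) :
  \tr X = \sum_a \sum_b X (mxtens_index (a, b)) (mxtens_index (a, b)).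
Proof.
rewrite pair_bigA /mxtrace (reindex (@mxtens_index k v)) /=.
  by apply: eq_bigr => -[a b].
by exists (@mxtens_unindex k v) => p _; rewrite (mxtens_indexK, mxtens_unindexK).
Qed.

Lemma mxtrace_ptrace2 k v (X : 'M[C]_(k * v)) : \tr (ptrace2 X) = \tr X.
Proof. by rewrite mxtrace_tensE; apply: eq_bigr => a _; rewrite mxE. Qed.

Lemma ptrace1_sum (T : finType) k v (F : T -> 'M[C]_(k * v)) :
  ptrace1 (\sum_i F i) = \sum_i ptrace1 (F i).
Proof.
apply/matrixP => i j; rewrite !mxE summxE.
under eq_bigr do rewrite summxE.
by rewrite exchange_big; apply: eq_bigr => x _; rewrite mxE.
Qed.

Lemma ptrace2_sum (T : finType) k v (F : T -> 'M[C]_(k * v)) :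
  ptrace2 (\sum_i F i) = \sum_i ptrace2 (F i).
Proof.
apply/matrixP => i j; rewrite !mxE summxE.
under eq_bigr do rewrite summxE.
by rewrite exchange_big; apply: eq_bigr => x _; rewrite mxE.
Qed.

Definition tens1 k (X : 'M[C]_k) : 'M[C]_(k * 1) :=
  sum_reindex (fun (_ : 'I_1) p => (mxtens_unindex p).1) X.
Arguments tens1 {k}.

Lemma mxtrace_tens1 k (X : 'M[C]_k) : \tr (tens1 X) = \tr X.
Proof.
rewrite mxtrace_tensE; apply: eq_bigr => a _.
by rewrite !big_ord1 mxE big_ord1 mxtens_indexK.
Qed.

Lemma ptrace1_tens1 k (X : 'M[C]_k) : ptrace1 (tens1 X) = (\tr X)%:M.
Proof.
apply/matrixP => i j; rewrite !ord1 !mxE eqxx mulr1n.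
by apply: eq_bigr => a _; rewrite mxE big_ord1 mxtens_indexK.
Qed.

Lemma ptrace2_tens1 k (X : 'M[C]_k) : ptrace2 (tens1 X) = X.
Proof.
by apply/matrixP => i j; rewrite !mxE big_ord1 mxE big_ord1 !mxtens_indexK.
Qed.

Definition trace_out_fst k v (X : 'M[C]_(k * v)) : 'M[C]_(1 * v) :=
  sum_reindex (fun a p => mxtens_index (a, (mxtens_unindex p).2)) X.
Arguments trace_out_fst {k v}.

Lemma mxtrace_trace_out_fst k v (X : 'M[C]_(k * v)) :
  \tr (trace_out_fst X) = \tr X.
Proof.
rewrite mxtrace_tensE big_ord1 [RHS]mxtrace_tensE exchange_big.
by apply: eq_bigr => b _; rewrite mxE mxtens_indexK.
Qed.

Lemma ptrace1_trace_out_fst k v (X : 'M[C]_(k * v)) :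
  ptrace1 (trace_out_fst X) = ptrace1 X.
Proof. by apply/matrixP => i j; rewrite !mxE big_ord1 mxE !mxtens_indexK. Qed.

Lemma ptrace2_trace_out_fst k v (X : 'M[C]_(k * v)) :
  ptrace2 (trace_out_fst X) = (\tr X)%:M.
Proof.
apply/matrixP => i j; rewrite !ord1 !mxE eqxx mulr1n mxtrace_tensE exchange_big.
by apply: eq_bigr => b _; rewrite mxE mxtens_indexK.
Qed.

Lemma is_instrument_postcomp (T : finType) n m l
    (G : T -> 'M[C]_n -> 'M[C]_m) (P : 'M[C]_m -> 'M[C]_l) :
  lin_map P -> completely_positive P -> trace_preserving P ->
  is_instrument G -> is_instrument (fun t => P \o G t).
Proof.
move=> linP cpP tpP [linG cpG tniG tpG]; split=> [t|t|t rho psd_rho|rho].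
- exact: lin_map_comp.
- exact: cp_comp.
- by rewrite /= tpP; apply: tniG.
- rewrite /induced_channel raddf_sum /=.
  by under eq_bigr do rewrite tpP; rewrite -(tpG rho) /induced_channel raddf_sum.
Qed.

Lemma is_instrument_seq (O L : finType) n m l
    (J : L -> 'M[C]_n -> 'M[C]_m) (R : L -> O -> 'M[C]_m -> 'M[C]_l) :
  is_instrument J -> (forall y, is_instrument (R y)) ->
  is_instrument (fun xy : O * L => R xy.2 xy.1 \o J xy.2).
Proof.
move=> [linJ cpJ tniJ tpJ] insR.
split=> [[x y]|[x y]|[x y] rho psd_rho|rho] /=.
- by have [linR _ _ _] := insR y; apply: lin_map_comp.
- by have [_ cpR _ _] := insR y; apply: cp_comp.
- have [_ _ tniR _] := insR y.
  exact: le_trans (tniR x _ (cp_psd (cpJ y) psd_rho)) (tniJ y rho psd_rho).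
- rewrite -(tpJ rho) /induced_channel !raddf_sum sum_prodE exchange_big /=.
  apply: eq_bigr => y _; have [_ _ _ <-] := insR y.
  by rewrite /induced_channel raddf_sum.
Qed.

Lemma is_instrument_forget_fst (O L : finType) n m
    (G : O * L -> 'M[C]_n -> 'M[C]_m) :
  is_instrument G ->
  is_instrument (fun uy : unit * L => fun rho => \sum_x G (x, uy.2) rho).
Proof.
move=> [linG cpG tniG tpG].
have tpG_pair rho : \sum_y \sum_x \tr (G (x, y) rho) = \tr rho.
  by rewrite -(tpG rho) /induced_channel raddf_sum sum_prodE exchange_big.
split=> [[u y]|[u y]|[u y] rho psd_rho|rho] /=.
- exact: lin_map_sum.
- exact: cp_sum.
- rewrite -tpG_pair (bigD1 y) //= raddf_sum lerDl.
  by apply: sumr_ge0 => y' _; apply: sumr_ge0 => x _; apply/psd_mxtrace_ge0/cp_psd.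
- rewrite -tpG_pair /induced_channel raddf_sum sum_prodE (big_pred1 tt) //=.
  by apply: eq_bigr => y _; rewrite raddf_sum.
Qed.

Lemma compatible_postprocessing (O L : finType) n k v
    (I : O -> 'M[C]_n -> 'M[C]_k) (J : L -> 'M[C]_n -> 'M[C]_v) (AJ : L -> 'M[C]_n) :
  is_instrument J -> induced_povm J AJ -> postprocessing I J ->
  compatible I (povm_ins AJ).
Proof.
move=> insJ AJ_J [R [insR I_RJ]].
exists (fun xy => tens1 \o (R xy.2 xy.1 \o J xy.2)); split.
- apply: is_instrument_postcomp (is_instrument_seq insJ insR).
  + exact: lin_map_sum_reindex.
  + exact: cp_sum_reindex.
  + exact: mxtrace_tens1.
- move=> y rho state_rho /=; under eq_bigr do rewrite ptrace1_tens1.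
  have [_ _ _ tpR] := insR y.
  rewrite /povm_ins AJ_J // -(tpR (J y rho)) /induced_channel.
  by rewrite [\tr _]raddf_sum raddf_sum.
- move=> x rho _ /=; under eq_bigr do rewrite ptrace2_tens1.
  by rewrite I_RJ.
Qed.

Lemma compatible_induced_channel (O L : finType) n k v
    (I : O -> 'M[C]_n -> 'M[C]_k) (B : L -> 'M[C]_n -> 'M[C]_v) :
  compatible I B -> compatible (channel_ins (induced_channel I)) B.
Proof.
move=> [G [insG GB GI]].
exists (fun uy : unit * L => fun rho => \sum_x G (x, uy.2) rho); split.
- exact: is_instrument_forget_fst.
- move=> y rho state_rho; rewrite (big_pred1 tt) //= ptrace1_sum.
  exact: GB.
- move=> u rho state_rho; under eq_bigr do rewrite ptrace2_sum.
  by rewrite exchange_big; apply: eq_bigr => x _; apply: GI.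
Qed.

Lemma compatible_induced_povm (O L : finType) n k v
    (I : O -> 'M[C]_n -> 'M[C]_k) (B : L -> 'M[C]_n -> 'M[C]_v) (AI : O -> 'M[C]_n) :
  compatible I B -> induced_povm I AI -> compatible (povm_ins AI) B.
Proof.
move=> [G [insG GB GI]] AI_I.
exists (fun xy => trace_out_fst \o G xy); split.
- apply: is_instrument_postcomp insG.
  + exact: lin_map_sum_reindex.
  + exact: cp_sum_reindex.
  + exact: mxtrace_trace_out_fst.
- move=> y rho state_rho /=; under eq_bigr do rewrite ptrace1_trace_out_fst.
  exact: GB.
- move=> x rho state_rho /=; under eq_bigr do rewrite ptrace2_trace_out_fst.
  rewrite /povm_ins AI_I // -(GI x rho state_rho) [\tr _]raddf_sum raddf_sum.
  by apply: eq_bigr => y _; rewrite /= mxtrace_ptrace2.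
Qed.
End Instruments.

Theorem proposition5 (R : realType) (Om La : finType) (n k v : nat)
  (I : Om -> 'M[R[i]]_n -> 'M[R[i]]_k) (J : La -> 'M[R[i]]_n -> 'M[R[i]]_v) :
  is_instrument I -> is_instrument J -> postprocessing I J ->
  forall AJ : La -> 'M[R[i]]_n, induced_povm J AJ ->
    [/\ compatible I (povm_ins AJ),
        compatible (channel_ins (induced_channel I)) (povm_ins AJ)
      & forall AI : Om -> 'M[R[i]]_n, induced_povm I AI ->
          compatible (povm_ins AI) (povm_ins AJ)].
Proof.
move=> _ insJ I_le_J AJ AJ_J.
have compat_I_AJ := compatible_postprocessing insJ AJ_J I_le_J.
split=> [//||AI AI_I].
- exact: compatible_induced_channel.
- exact: compatible_induced_povm AI_I.
Qed.
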